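(* For all integers $n\geq0$, \[ \sum_{j=0}^n\binom{2j}{j}4^{n-j}O_jH_{n-j}=2^{2n-1}(n+1)\Bigl((1-H_{n+1})^2+1-H_{n+1}^{(2)}\Bigr)-\sum_{j=1}^nC_{n-j}4^{j-1}j\Bigl((1-H_j)^2+1-H_j^{(2)}\Bigr). \]
   Context: $H_n=\sum_{k=1}^n\frac1k$ ($H_0=0$), $H_n^{(2)}=\sum_{k=1}^n\frac1{k^2}$ ($H_0^{(2)}=0$), $O_n=\sum_{k=1}^n\frac1{2k-1}$ ($O_0=0$), and $C_n=\frac1{n+1}\binom{2n}{n}$ is the $n$th Catalan number. An empty sum is $0$. *)

From mathcomp Require Import all_boot all_order all_algebra.
Set Implicit Arguments. Unset Strict Implicit. Unset Printing Implicit Defensive.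
Import Order.TTheory GRing.Theory Num.Theory.
Local Open Scope ring_scope.

Definition H (n : nat) : rat := \sum_(1 <= k < n.+1) (k%:R)^-1.
Definition H2 (n : nat) : rat := \sum_(1 <= k < n.+1) ((k%:R) ^+ 2)^-1.
Definition O (n : nat) : rat := \sum_(1 <= k < n.+1) ((2 * k - 1)%N%:R)^-1.
Definition catalan (n : nat) : rat := ('C(2 * n, n))%:R / (n.+1)%:R.

From mathcomp Require Import all_boot all_order all_algebra.
From mathcomp Require Import ring lra zify.
Import Order.TTheory GRing.Theory Num.Theory.
Local Open Scope ring_scope.
Set Implicit Arguments. Unset Strict Implicit.

(* Read sequences as generating functions in t. The operator D = (1 - 4t) d/dt is a
   derivation of the Cauchy product, and a solution of D X = c X + W is determined by
   X(0). The series of C(2n,n), 4^n, 4^n H_n, C(2n,n) O_n and sqrt(1 - 4t) satisfy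
   such equations with c = 2, 4, 4, 2, -2, and the summand g2 of the right-hand side
   spans a Jordan block g2, g1, g0 of D with eigenvalue 8. By the Leibniz rule,
   twice the left-hand side and g2 * sqrt(1 - 4t) then solve the same triangular system
   with eigenvalue 6 and agree at t = 0. *)

Section CauchyProduct.

Variable R : comPzRingType.
Implicit Types (x y u v w : nat -> R) (c d : R).

Definition conv x y (n : nat) : R := \sum_(0 <= j < n.+1) x j * y (n - j)%N.

(* The coefficients of (1 - 4t) X'(t), where X is the generating function of x. *)
Definition diffop x (n : nat) : R := n.+1%:R * x n.+1 - 4 * n%:R * x n.

Definition ode c w x := forall n, diffop x n = c * x n + w n.

Lemma conv0 x y : conv x y 0 = x 0%N * y 0%N.
Proof. by rewrite /conv big_nat1. Qed.

Lemma conv0l y n : conv (fun=> 0) y n = 0.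
Proof. by rewrite /conv big1 // => j _; rewrite mul0r. Qed.

Lemma conv0r x n : conv x (fun=> 0) n = 0.
Proof. by rewrite /conv big1 // => j _; rewrite mulr0. Qed.

Lemma convZl c x y n : conv (fun j => c * x j) y n = c * conv x y n.
Proof. by rewrite /conv big_distrr /=; apply: eq_bigr => j _; rewrite mulrA. Qed.

Lemma convZr c x y n : conv x (fun j => c * y j) n = c * conv x y n.
Proof. by rewrite /conv big_distrr /=; apply: eq_bigr => j _; rewrite mulrCA. Qed.

Lemma diffopM x y n :
  diffop (conv x y) n = conv (diffop x) y n + conv x (diffop y) n.
Proof.
(* Split (n+1) as (j+1) + (n+1-j) in the top coefficient, and 4n as 4j + 4(n-j). *)
have shiftl : \sum_(0 <= j < n.+1) j.+1%:R * x j.+1 * y (n - j)%N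
    = \sum_(0 <= j < n.+2) j%:R * x j * y (n.+1 - j)%N.
  by rewrite [RHS]big_nat_recl //= !mul0r add0r.
have shiftr : \sum_(0 <= j < n.+1) (n.+1 - j)%N%:R * x j * y (n.+1 - j)%N
    = \sum_(0 <= j < n.+2) (n.+1 - j)%N%:R * x j * y (n.+1 - j)%N.
  by rewrite [RHS]big_nat_recr //= subnn !mul0r addr0.
have top : n.+1%:R * conv x y n.+1
    = \sum_(0 <= j < n.+1) j.+1%:R * x j.+1 * y (n - j)%N
    + \sum_(0 <= j < n.+1) (n.+1 - j)%N%:R * x j * y (n.+1 - j)%N.
  rewrite shiftl shiftr -big_split big_distrr /=.
  apply: eq_big_nat => j /andP[_ hj]; rewrite natrB //; ring.
rewrite /diffop top /conv !big_distrr /= -!big_split /= -sumrB.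
apply: eq_big_nat => j /andP[_ hj].
have -> : (n.+1 - j = (n - j).+1)%N by lia.
rewrite natrB //; ring.
Qed.

Lemma ode_conv c d u v x y : ode c u x -> ode d v y ->
  ode (c + d) (fun n => conv u y n + conv x v n) (conv x y).
Proof.
move=> hx hy n; rewrite diffopM /conv !big_distrr -!big_split /=.
by apply: eq_bigr => j _; rewrite hx hy; ring.
Qed.

Lemma ode_ext c c' w w' x :
  (forall n, c * x n + w n = c' * x n + w' n) -> ode c w x -> ode c' w' x.
Proof. by move=> e hx n; rewrite hx e. Qed.

Lemma odeD c w w' x y : ode c w x -> ode c w' y ->
  ode c (fun n => w n + w' n) (fun n => x n + y n).
Proof.
move=> hx hy n; have -> : diffop (fun n => x n + y n) n = diffop x n + diffop y n.
  by rewrite /diffop; ring.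
by rewrite hx hy; ring.
Qed.

Lemma odeZ a c w x : ode c w x -> ode c (fun n => a * w n) (fun n => a * x n).
Proof.
move=> hx n; have -> : diffop (fun n => a * x n) n = a * diffop x n.
  by rewrite /diffop; ring.
by rewrite hx; ring.
Qed.

End CauchyProduct.

Lemma ode_uniq (R : numFieldType) (c : R) w x y :
  ode c w x -> ode c w y -> x 0%N = y 0%N -> x =1 y.
Proof.
move=> hx hy x0y0; elim=> [|n IH] //.
have n1_neq0 : n.+1%:R != 0 :> R by rewrite pnatr_eq0.
have step z : ode c w z -> n.+1%:R * z n.+1 = (c + 4 * n%:R) * z n + w n.
  move=> hz; have := hz n; rewrite /diffop => hzn.
  by rewrite -(subrK (4 * n%:R * z n) (n.+1%:R * z n.+1)) hzn; ring.
by apply: (mulfI n1_neq0); rewrite step // step // IH.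
Qed.

Lemma mul_bin_centralS k :
  (k.+1 * 'C(2 * k.+1, k.+1) = 2 * (2 * k).+1 * 'C(2 * k, k))%N.
Proof.
have top := mul_bin_diag (2 * k.+1) k.
have bot := mul_bin_diag (2 * k).+1 k.
have sym : 'C((2 * k).+1, k.+1) = 'C((2 * k).+1, k).
  by rewrite -[in RHS]bin_sub; [congr 'C(_, _); lia | lia].
have pred_even : ((2 * k.+1).-1 = (2 * k).+1)%N by lia.
rewrite pred_even in top; rewrite /= sym in bot; rewrite -top; nia.
Qed.

Ltac natr_neq0 :=
  repeat (apply/andP; split); apply: lt0r_neq0;
  match goal with n : nat |- _ => have := ler0n rat n end; lra.

Definition cbin n : rat := 'C(2 * n, n)%:R.
Definition pow4 n : rat := 4 ^+ n.
Definition pow4H n : rat := 4 ^+ n * H n.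
Definition cbinO n : rat := cbin n * O n.

(* Taylor coefficients of sqrt(1 - 4t). *)
Definition sqrt1m4 n : rat := if n is j.+1 then -2 * catalan j else 1.

Definition hquad j : rat := (1 - H j) ^+ 2 + 1 - H2 j.
Definition g0 n : rat := 4 ^+ n * (2 * n.+1%:R).
Definition g1 n : rat := 4 ^+ n * (2 * n.+1%:R) * (H n.+1 - 1).
Definition g2 n : rat := 4 ^+ n * n.+1%:R * hquad n.+1.

Lemma H0 : H 0 = 0. Proof. by rewrite /H big_geq. Qed.
Lemma O0 : O 0 = 0. Proof. by rewrite /O big_geq. Qed.
Lemma HS n : H n.+1 = H n + n.+1%:R^-1. Proof. by rewrite /H big_nat_recr. Qed.
Lemma H2S n : H2 n.+1 = H2 n + (n.+1%:R ^+ 2)^-1. Proof. by rewrite /H2 big_nat_recr. Qed.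
Lemma OS n : O n.+1 = O n + (2 * n.+1%:R - 1)^-1.
Proof. by rewrite /O big_nat_recr //= natrB ?natrM // muln_gt0. Qed.
Lemma H1 : H 1 = 1. Proof. by rewrite HS H0 add0r invr1. Qed.
Lemma H2_1 : H2 1 = 1. Proof. by rewrite H2S /H2 big_geq // add0r expr1n invr1. Qed.

Lemma cbinS n : n.+1%:R * cbin n.+1 = 2 * (2 * n.+1%:R - 1) * cbin n.
Proof.
have odd_nat : (2 * n).+1%:R = 2 * n.+1%:R - 1 :> rat.
  by rewrite -natr1 natrM -[n.+1%:R]natr1; ring.
by rewrite /cbin -natrM mul_bin_centralS !natrM odd_nat.
Qed.

Lemma ode_cbin : ode 2 (fun=> 0) cbin.
Proof. by move=> n; rewrite /diffop cbinS; ring. Qed.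

Lemma ode_pow4 : ode 4 (fun=> 0) pow4.
Proof. by move=> n; rewrite /diffop /pow4 exprS; ring. Qed.

Lemma ode_pow4H : ode 4 (fun n => 4 * pow4 n) pow4H.
Proof.
move=> n; rewrite /diffop /pow4H /pow4 HS exprS.
by field; natr_neq0.
Qed.

Lemma ode_cbinO : ode 2 (fun n => 2 * cbin n) cbinO.
Proof.
move=> n; rewrite /diffop /cbinO OS mulrA cbinS.
by field; natr_neq0.
Qed.

Lemma ode_sqrt1m4 : ode (-2) (fun=> 0) sqrt1m4.
Proof.
case=> [|n]; rewrite /diffop /sqrt1m4 /catalan.
  by rewrite muln0 bin0 divr1; ring.
rewrite -[('C(2 * n.+1, n.+1))%:R]/(cbin n.+1) -[('C(2 * n, n))%:R]/(cbin n).
have -> : cbin n.+1 = 2 * (2 * n.+1%:R - 1) * cbin n / n.+1%:R.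
  by rewrite -cbinS mulrAC divff ?mul1r // pnatr_eq0.
by field; natr_neq0.
Qed.

Lemma ode_g0 : ode 8 (fun=> 0) g0.
Proof. by move=> n; rewrite /diffop /g0 exprS; ring. Qed.

Lemma ode_g1 : ode 8 (fun n => 4 * g0 n) g1.
Proof. by move=> n; rewrite /diffop /g1 /g0 (HS n.+1) exprS; field; natr_neq0. Qed.

Lemma ode_g2 : ode 8 (fun n => 4 * g1 n) g2.
Proof.
by move=> n; rewrite /diffop /g2 /g1 /hquad (HS n.+1) (H2S n.+1) exprS; field; natr_neq0.
Qed.

Lemma conv_g0_sqrt1m4 : conv g0 sqrt1m4 =1 (fun n => 2 * conv cbin pow4 n).
Proof.
apply: (@ode_uniq _ 6 (fun=> 0)).
- apply: ode_ext (ode_conv ode_g0 ode_sqrt1m4) => n.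
  by rewrite conv0l conv0r; ring.
- apply: ode_ext (odeZ 2 (ode_conv ode_cbin ode_pow4)) => n.
  by rewrite conv0l conv0r; ring.
- by rewrite !conv0 /g0 /sqrt1m4 /cbin /pow4 muln0 bin0; ring.
Qed.

Lemma conv_g1_sqrt1m4 :
  conv g1 sqrt1m4 =1 (fun n => conv cbin pow4H n + 2 * conv cbinO pow4 n).
Proof.
apply: (@ode_uniq _ 6 (fun n => 8 * conv cbin pow4 n)).
- apply: ode_ext (ode_conv ode_g1 ode_sqrt1m4) => n.
  by rewrite convZl conv_g0_sqrt1m4 conv0r; ring.
- apply: ode_ext (odeD (ode_conv ode_cbin ode_pow4H)
                       (odeZ 2 (ode_conv ode_cbinO ode_pow4))) => n.
  by rewrite conv0l conv0r convZl convZr; ring.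
- by rewrite !conv0 /g1 /pow4H /cbinO H1 H0 O0; ring.
Qed.

Lemma conv_g2_sqrt1m4 : conv g2 sqrt1m4 =1 (fun n => 2 * conv cbinO pow4H n).
Proof.
apply: (@ode_uniq _ 6 (fun n => 4 * conv g1 sqrt1m4 n)).
- apply: ode_ext (ode_conv ode_g2 ode_sqrt1m4) => n.
  by rewrite convZl conv0r; ring.
- apply: ode_ext (odeZ 2 (ode_conv ode_cbinO ode_pow4H)) => n.
  by rewrite convZl convZr conv_g1_sqrt1m4; ring.
- by rewrite !conv0 /g2 /hquad /pow4H /cbinO H1 H2_1 H0 O0; ring.
Qed.

Lemma conv_sqrt1m4 x n :
  conv x sqrt1m4 n = x n - 2 * \sum_(0 <= i < n) x i * catalan (n - i.+1).
Proof.
rewrite /conv big_nat_recr //= subnn mulr1 addrC big_distrr /=; congr (_ + _).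
rewrite -sumrN; apply: eq_big_nat => i /andP[_ hi].
have -> : (n - i = (n - i.+1).+1)%N by lia.
by rewrite /=; ring.
Qed.

Theorem corollary10 (n : nat) :
  \sum_(0 <= j < n.+1) ('C(2 * j, j))%:R * 4 ^+ (n - j) * O j * H (n - j)
  = (2 ^+ (2 * n) / 2) * (n.+1)%:R
      * ((1 - H n.+1) ^+ 2 + 1 - H2 n.+1)
    - \sum_(1 <= j < n.+1) catalan (n - j) * 4 ^+ (j - 1) * j%:R
        * ((1 - H j) ^+ 2 + 1 - H2 j) :> rat.
Proof.
have lhsE : \sum_(0 <= j < n.+1) ('C(2 * j, j))%:R * 4 ^+ (n - j) * O j * H (n - j)
    = conv cbinO pow4H n.
  by apply: eq_bigr => j _; rewrite /cbinO /pow4H; ring.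
have sumE : \sum_(1 <= j < n.+1) catalan (n - j) * 4 ^+ (j - 1) * j%:R
        * ((1 - H j) ^+ 2 + 1 - H2 j)
    = \sum_(0 <= i < n) g2 i * catalan (n - i.+1).
  by rewrite big_add1 /=; apply: eq_bigr => i _; rewrite /g2 /hquad subn1 /=; ring.
have pow2E : 2 ^+ (2 * n) = 4 ^+ n :> rat by rewrite exprM; congr (_ ^+ _); ring.
have := conv_g2_sqrt1m4 n; rewrite conv_sqrt1m4 [g2 n]/g2 /hquad => e.
by rewrite lhsE sumE pow2E -[conv _ _ _](mulKf (_ : 2 != 0)) // -e; field.
Qed.
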